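(* Let $\alpha>1$ and let $m_0\in\mathrm{BUC}([0,\infty))$ be non-decreasing with $m_0(0)=0$, $M=\sup m_0>0$, and suppose there is $c_0\in(0,\infty)$ with $m_0(\rho)<M$ for $\rho<c_0$ and $m_0(\rho)=M$ for $\rho\ge c_0$. If $$\limsup_{\rho\to c_0^-}\frac{M-m_0(\rho)}{(c_0-\rho)^{\frac\alpha{\alpha-1}}}=+\infty,$$ then there is no waiting time: for every $t>0$, the viscosity solution $m$ of the mass problem with datum $m_0$ satisfies $S(t):=\inf\{\rho: m(t,\rho)=M\}>c_0$.
   Context: $\mathrm{BUC}$ denotes bounded uniformly continuous functions. The mass problem is $m_t+(m_\rho)_+^\alpha m=0$ ($t,\rho>0$), $m(t,0)=0$, $m(0,\cdot)=m_0$, in the viscosity sense: with Fréchet super/subdifferentials $D^\pm$, a continuous $m$ is a subsolution if $p_1+(p_2)_+^\alpha m\le0$ for $(p_1,p_2)\in D^+m(t,\rho)$, $m(0,\cdot)\le m_0$, $m(t,0)\le0$; a supersolution with reversed inequalities and $D^-$; a solution if both. For $m_0\in\mathrm{BUC}$ non-decreasing with $m_0(0)=0$ a unique $\mathrm{BUC}$ viscosity solution exists and a comparison principle holds. *)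

From Stdlib Require Import Reals.
From Coquelicot Require Import Coquelicot.
Open Scope R_scope.

Definition pos_pow (p alpha : R) : R :=
  if Rlt_dec 0 p then Rpower p alpha else 0.

Definition norm2 (a b : R) : R := sqrt (a * a + b * b).

Definition inQ (t rho : R) : Prop := 0 <= t /\ 0 <= rho.

Definition BUC1 (f : R -> R) : Prop :=
  (exists B, forall x, 0 <= x -> Rabs (f x) <= B) /\
  (forall eps, 0 < eps -> exists delta, 0 < delta /\
     forall x y, 0 <= x -> 0 <= y -> Rabs (x - y) < delta ->
       Rabs (f x - f y) < eps).

Definition BUC2 (m : R -> R -> R) : Prop :=
  (exists B, forall t rho, inQ t rho -> Rabs (m t rho) <= B) /\
  (forall eps, 0 < eps -> exists delta, 0 < delta /\
     forall t rho s r, inQ t rho -> inQ s r ->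
       norm2 (s - t) (r - rho) < delta ->
       Rabs (m s r - m t rho) < eps).

Definition continuous_on_Q (m : R -> R -> R) : Prop :=
  forall t rho, inQ t rho ->
  forall eps, 0 < eps -> exists delta, 0 < delta /\
     forall s r, inQ s r -> norm2 (s - t) (r - rho) < delta ->
       Rabs (m s r - m t rho) < eps.

Definition superdiff (m : R -> R -> R) (t rho p1 p2 : R) : Prop :=
  forall eps, 0 < eps -> exists delta, 0 < delta /\
    forall s r, inQ s r -> norm2 (s - t) (r - rho) < delta ->
      m s r - m t rho - p1 * (s - t) - p2 * (r - rho)
        <= eps * norm2 (s - t) (r - rho).

Definition subdiff (m : R -> R -> R) (t rho p1 p2 : R) : Prop :=
  forall eps, 0 < eps -> exists delta, 0 < delta /\
    forall s r, inQ s r -> norm2 (s - t) (r - rho) < delta ->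
      m s r - m t rho - p1 * (s - t) - p2 * (r - rho)
        >= - eps * norm2 (s - t) (r - rho).

Definition visc_subsolution (alpha : R) (m0 : R -> R) (m : R -> R -> R) : Prop :=
  continuous_on_Q m /\
  (forall t rho p1 p2, 0 < t -> 0 < rho -> superdiff m t rho p1 p2 ->
     p1 + pos_pow p2 alpha * m t rho <= 0) /\
  (forall rho, 0 <= rho -> m 0 rho <= m0 rho) /\
  (forall t, 0 <= t -> m t 0 <= 0).

Definition visc_supersolution (alpha : R) (m0 : R -> R) (m : R -> R -> R) : Prop :=
  continuous_on_Q m /\
  (forall t rho p1 p2, 0 < t -> 0 < rho -> subdiff m t rho p1 p2 ->
     p1 + pos_pow p2 alpha * m t rho >= 0) /\
  (forall rho, 0 <= rho -> m 0 rho >= m0 rho) /\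
  (forall t, 0 <= t -> m t 0 >= 0).

Definition visc_solution (alpha : R) (m0 : R -> R) (m : R -> R -> R) : Prop :=
  visc_subsolution alpha m0 m /\ visc_supersolution alpha m0 m.

Definition limsup_left_infty (f : R -> R) (c : R) : Prop :=
  forall K delta, 0 < delta -> exists x, c - delta < x < c /\ K < f x.

(* S(t) = inf { rho >= 0 : m(t,rho) = M }  (in Rbar; +oo if empty) *)
Definition front (m : R -> R -> R) (M t : R) : Rbar :=
  Glb_Rbar (fun rho => 0 <= rho /\ m t rho = M).

From Stdlib Require Import Reals Lra Classical ClassicalEpsilon.
From Coquelicot Require Import Coquelicot.
Open Scope R_scope.

(* Fix t0 > 0.  Because M - m0 is steeper than (c0 - rho)^(alpha/(alpha-1))
   near c0, we can pick x < c0, h = c0 - x and a gap dl = M - m0 x with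
   dl / (M t0) < (dl / 4h)^alpha.  Two explicit strict supersolutions then
   bound the subsolution m from above:
   - a left barrier  M - dl + eps t + th / (x - rho)  on [0, 2 t0) x [0, x - eta],
     which keeps m well below M up to rho = x - h/4;
   - a linear barrier  M + L (rho - x) - lam t  with L = dl / 4h, whose decay
     rate lam = dl / 2 t0 is allowed precisely by the choice of x.
   At time t0 the two bounds give m(t0, rho) < M for rho <= c0 + h/2, hence
   S(t0) > c0. *)

Lemma norm2_ge_l (u v : R) : Rabs u <= norm2 u v.
Proof.
  unfold norm2; rewrite <- sqrt_Rsqr_abs; apply sqrt_le_1_alt; unfold Rsqr; nra.
Qed.

Lemma norm2_ge_r (u v : R) : Rabs v <= norm2 u v.
Proof.
  unfold norm2; rewrite <- sqrt_Rsqr_abs; apply sqrt_le_1_alt; unfold Rsqr; nra.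
Qed.

Lemma norm2_le_sum (u v : R) : norm2 u v <= Rabs u + Rabs v.
Proof.
  unfold norm2.
  pose proof (Rabs_pos u); pose proof (Rabs_pos v).
  rewrite <- (sqrt_Rsqr (Rabs u + Rabs v)) by lra.
  apply sqrt_le_1_alt; unfold Rsqr.
  assert (u * u = Rabs u * Rabs u) by (rewrite <- Rabs_mult, Rabs_pos_eq; nra).
  assert (v * v = Rabs v * Rabs v) by (rewrite <- Rabs_mult, Rabs_pos_eq; nra).
  nra.
Qed.

Definition unif_cont_rect (f : R -> R -> R) (t0 t1 a b : R) : Prop :=
  forall eps, 0 < eps -> exists d, 0 < d /\
    forall t t' r r', t0 <= t <= t1 -> t0 <= t' <= t1 -> a <= r <= b -> a <= r' <= b ->
      Rabs (t - t') < d -> Rabs (r - r') < d -> Rabs (f t r - f t' r') < eps.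

Lemma unif_cont_rect_shrink (f : R -> R -> R) (t0 t1 a b t1' : R) :
  t1' <= t1 -> unif_cont_rect f t0 t1 a b -> unif_cont_rect f t0 t1' a b.
Proof.
  intros Ht Hf eps Heps; destruct (Hf eps Heps) as [d [Hd Hf']].
  exists d; split; [exact Hd|]; intros; apply Hf'; auto; lra.
Qed.

Lemma unif_cont_rect_plus (f g : R -> R -> R) (t0 t1 a b : R) :
  unif_cont_rect f t0 t1 a b -> unif_cont_rect g t0 t1 a b ->
  unif_cont_rect (fun t r => f t r + g t r) t0 t1 a b.
Proof.
  intros Hf Hg eps Heps.
  destruct (Hf (eps / 2) ltac:(lra)) as [d1 [Hd1 Hf']].
  destruct (Hg (eps / 2) ltac:(lra)) as [d2 [Hd2 Hg']].
  exists (Rmin d1 d2); split; [now apply Rmin_pos|].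
  intros t t' r r' Ht Ht' Hr Hr' Htt Hrr.
  pose proof (Rmin_l d1 d2); pose proof (Rmin_r d1 d2).
  specialize (Hf' t t' r r' Ht Ht' Hr Hr' ltac:(lra) ltac:(lra)).
  specialize (Hg' t t' r r' Ht Ht' Hr Hr' ltac:(lra) ltac:(lra)).
  split_Rabs; lra.
Qed.

Lemma unif_cont_rect_minus (f g : R -> R -> R) (t0 t1 a b : R) :
  unif_cont_rect f t0 t1 a b -> unif_cont_rect g t0 t1 a b ->
  unif_cont_rect (fun t r => f t r - g t r) t0 t1 a b.
Proof.
  intros Hf Hg; apply (unif_cont_rect_plus f (fun t r => - g t r)); [exact Hf|].
  intros eps Heps; destruct (Hg eps Heps) as [d [Hd Hg']].
  exists d; split; [exact Hd|]; intros.
  rewrite <- Rabs_Ropp; replace (- (- g t r - - g t' r')) with (g t r - g t' r') by ring.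
  auto.
Qed.

(* A sum f(t) + g(r) of continuous functions is uniformly continuous on a
   compact rectangle (Heine's theorem on each factor). *)
Lemma unif_cont_rect_separable (f g : R -> R) (t0 t1 a b : R) :
  (forall t, t0 <= t <= t1 -> continuity_pt f t) ->
  (forall r, a <= r <= b -> continuity_pt g r) ->
  unif_cont_rect (fun t r => f t + g r) t0 t1 a b.
Proof.
  intros Hf Hg eps Heps.
  destruct (@Heine_cor2 f t0 t1 Hf (mkposreal (eps / 2) ltac:(lra))) as [[d1 Hd1] Hf'].
  destruct (@Heine_cor2 g a b Hg (mkposreal (eps / 2) ltac:(lra))) as [[d2 Hd2] Hg'].
  simpl in *.
  exists (Rmin d1 d2); split; [now apply Rmin_pos|].
  intros t t' r r' Ht Ht' Hr Hr' Htt Hrr.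
  pose proof (Rmin_l d1 d2); pose proof (Rmin_r d1 d2).
  specialize (Hf' t t' Ht Ht' ltac:(lra)); specialize (Hg' r r' Hr Hr' ltac:(lra)).
  split_Rabs; lra.
Qed.

Lemma unif_cont_rect_of_quadrant (m : R -> R -> R) (t0 t1 a b : R) :
  0 <= t0 -> 0 <= a ->
  (forall eps, 0 < eps -> exists delta, 0 < delta /\
     forall t rho s r, inQ t rho -> inQ s r ->
       norm2 (s - t) (r - rho) < delta -> Rabs (m s r - m t rho) < eps) ->
  unif_cont_rect m t0 t1 a b.
Proof.
  intros Ht0 Ha Hm eps Heps; destruct (Hm eps Heps) as [d [Hd Hm']].
  exists (d / 2); split; [lra|].
  intros t t' r r' Ht Ht' Hr Hr' Htt Hrr.
  apply (Hm' t' r' t r); try (split; lra).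
  eapply Rle_lt_trans; [apply norm2_le_sum|].
  lra.
Qed.

(* Projection onto [lo, hi]; it extends a function on [lo, hi] to all of R
   without changing its values there. *)
Definition clamp (lo hi x : R) : R := Rmax lo (Rmin hi x).

Lemma clamp_in (lo hi x : R) : lo <= hi -> lo <= clamp lo hi x <= hi.
Proof. intros; unfold clamp, Rmax, Rmin; repeat destruct Rle_dec; lra. Qed.

Lemma clamp_id (lo hi x : R) : lo <= x <= hi -> clamp lo hi x = x.
Proof. intros; unfold clamp, Rmax, Rmin; repeat destruct Rle_dec; lra. Qed.

Lemma clamp_lip (lo hi x y : R) :
  lo <= hi -> Rabs (clamp lo hi x - clamp lo hi y) <= Rabs (x - y).
Proof. intros; unfold clamp, Rmax, Rmin; repeat destruct Rle_dec; split_Rabs; lra. Qed.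

Lemma max_on_interval (g : R -> R) (a b : R) :
  a <= b ->
  (forall x, a <= x <= b -> forall eps, 0 < eps -> exists d, 0 < d /\
     forall y, a <= y <= b -> Rabs (y - x) < d -> Rabs (g y - g x) < eps) ->
  exists xm, a <= xm <= b /\ forall x, a <= x <= b -> g x <= g xm.
Proof.
  intros Hab Hg.
  destruct (continuity_ab_maj (fun x => g (clamp a b x)) a b Hab) as [xm [Hmax Hxm]].
  - intros c Hc eps Heps; destruct (Hg c Hc eps Heps) as [d [Hd Hg']].
    exists d; split; [exact Hd|]; intros y [_ Hy]; simpl in *; unfold R_dist in *.
    rewrite (clamp_id a b c Hc); apply Hg'; [now apply clamp_in|].
    rewrite <- (clamp_id a b c Hc); eapply Rle_lt_trans; [apply clamp_lip|]; auto.
  - exists xm; split; [exact Hxm|]; intros x Hx.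
    specialize (Hmax x Hx); rewrite !clamp_id in Hmax; auto.
Qed.

(* A uniformly continuous function attains its maximum on a rectangle:
   maximize in r for every t, then maximize the resulting continuous
   function of t. *)
Lemma max_on_rect (f : R -> R -> R) (t0 t1 a b : R) :
  t0 <= t1 -> a <= b -> unif_cont_rect f t0 t1 a b ->
  exists ts rs, t0 <= ts <= t1 /\ a <= rs <= b /\
    forall t r, t0 <= t <= t1 -> a <= r <= b -> f t r <= f ts rs.
Proof.
  intros Ht Hab Hf.
  assert (Hsec : forall t, exists r, a <= r <= b /\
            (t0 <= t <= t1 -> forall r', a <= r' <= b -> f t r' <= f t r)).
  { intros t; destruct (classic (t0 <= t <= t1)) as [Ht01|Hout].
    - destruct (max_on_interval (f t) a b Hab) as [r [Hr Hmax]].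
      + intros r Hr eps Heps; destruct (Hf eps Heps) as [d [Hd Hf']].
        exists d; split; [exact Hd|]; intros r' Hr' Hrr.
        apply Hf'; auto; rewrite Rminus_eq_0, Rabs_R0; exact Hd.
      + exists r; auto.
    - exists a; split; [lra|]; tauto. }
  destruct (choice _ Hsec) as [rmax Hrmax].
  destruct (max_on_interval (fun t => f t (rmax t)) t0 t1 Ht) as [ts [Hts Hmax]].
  - intros t Ht' eps Heps; destruct (Hf (eps / 2) ltac:(lra)) as [d [Hd Hf']].
    exists d; split; [exact Hd|]; intros t' Ht'' Htt.
    destruct (Hrmax t) as [Hr Hmt]; destruct (Hrmax t') as [Hr' Hmt'].
    specialize (Hmt Ht' (rmax t') Hr'); specialize (Hmt' Ht'' (rmax t) Hr).
    assert (Rabs (f t' (rmax t) - f t (rmax t)) < eps / 2)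
      by (apply Hf'; auto; rewrite Rminus_eq_0, Rabs_R0; exact Hd).
    assert (Rabs (f t' (rmax t') - f t (rmax t')) < eps / 2)
      by (apply Hf'; auto; rewrite Rminus_eq_0, Rabs_R0; exact Hd).
    split_Rabs; lra.
  - destruct (Hrmax ts) as [Hrs _].
    exists ts, (rmax ts); do 2 (split; [assumption|]).
    intros t r Ht' Hr; destruct (Hrmax t) as [_ Hmt].
    specialize (Hmt Ht' r Hr); specialize (Hmax t Ht'); simpl in Hmax; lra.
Qed.

Lemma rect_max_is_local_max (f : R -> R -> R) (t0 t1 a b ts rs : R) :
  t0 < ts < t1 -> a < rs < b ->
  (forall t r, t0 <= t <= t1 -> a <= r <= b -> f t r <= f ts rs) ->
  exists d, 0 < d /\ forall s q, norm2 (s - ts) (q - rs) < d -> f s q <= f ts rs.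
Proof.
  intros Hts Hrs Hmax.
  set (d := Rmin (Rmin (ts - t0) (t1 - ts)) (Rmin (rs - a) (b - rs))).
  assert (Hd : 0 < d /\ d <= ts - t0 /\ d <= t1 - ts /\ d <= rs - a /\ d <= b - rs).
  { unfold d; pose proof (Rmin_l (ts - t0) (t1 - ts)); pose proof (Rmin_r (ts - t0) (t1 - ts)).
    pose proof (Rmin_l (rs - a) (b - rs)); pose proof (Rmin_r (rs - a) (b - rs)).
    pose proof (Rmin_l (Rmin (ts - t0) (t1 - ts)) (Rmin (rs - a) (b - rs))).
    pose proof (Rmin_r (Rmin (ts - t0) (t1 - ts)) (Rmin (rs - a) (b - rs))).
    assert (0 < d) by (unfold d; repeat apply Rmin_pos; lra).
    unfold d in *; lra. }
  exists d; split; [lra|]; intros s q Hn.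
  pose proof (norm2_ge_l (s - ts) (q - rs)); pose proof (norm2_ge_r (s - ts) (q - rs)).
  apply Hmax; split_Rabs; lra.
Qed.

Lemma derivative_first_order (f : R -> R) (x l : R) :
  derivable_pt_lim f x l ->
  forall eps, 0 < eps -> exists d, 0 < d /\
    forall y, Rabs (y - x) < d -> Rabs (f y - f x - l * (y - x)) <= eps * Rabs (y - x).
Proof.
  intros Hf eps Heps; destruct (Hf eps Heps) as [[d Hd] Hf']; simpl in Hf'.
  exists d; split; [exact Hd|]; intros y Hy.
  destruct (Req_dec y x) as [->|Hyx].
  - rewrite !Rminus_eq_0, Rmult_0_r, Rminus_0_r, Rabs_R0; lra.
  - assert (Hh : y - x <> 0) by lra.
    specialize (Hf' (y - x) Hh Hy); replace (x + (y - x)) with y in Hf' by ring.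
    replace (f y - f x - l * (y - x)) with (((f y - f x) / (y - x) - l) * (y - x))
      by (field; exact Hh).
    rewrite Rabs_mult; apply Rmult_le_compat_r; [apply Rabs_pos|lra].
Qed.

Lemma superdiff_separable (f g : R -> R) (t r p1 p2 : R) :
  derivable_pt_lim f t p1 -> derivable_pt_lim g r p2 ->
  superdiff (fun s q => f s + g q) t r p1 p2.
Proof.
  intros Hf Hg eps Heps.
  destruct (derivative_first_order f t p1 Hf (eps / 2) ltac:(lra)) as [d1 [Hd1 Hf']].
  destruct (derivative_first_order g r p2 Hg (eps / 2) ltac:(lra)) as [d2 [Hd2 Hg']].
  exists (Rmin d1 d2); split; [now apply Rmin_pos|].
  intros s q _ Hn.
  pose proof (Rmin_l d1 d2); pose proof (Rmin_r d1 d2).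
  pose proof (norm2_ge_l (s - t) (q - r)); pose proof (norm2_ge_r (s - t) (q - r)).
  specialize (Hf' s ltac:(lra)); specialize (Hg' q ltac:(lra)).
  assert (eps / 2 * Rabs (s - t) <= eps / 2 * norm2 (s - t) (q - r))
    by (apply Rmult_le_compat_l; lra).
  assert (eps / 2 * Rabs (q - r) <= eps / 2 * norm2 (s - t) (q - r))
    by (apply Rmult_le_compat_l; lra).
  pose proof (Rle_abs (f s - f t - p1 * (s - t))).
  pose proof (Rle_abs (g q - g r - p2 * (q - r))).
  lra.
Qed.

Lemma superdiff_plus (u v : R -> R -> R) (t r p1 p2 q1 q2 : R) :
  superdiff u t r p1 p2 -> superdiff v t r q1 q2 ->
  superdiff (fun s q => u s q + v s q) t r (p1 + q1) (p2 + q2).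
Proof.
  intros Hu Hv eps Heps.
  destruct (Hu (eps / 2) ltac:(lra)) as [d1 [Hd1 Hu']].
  destruct (Hv (eps / 2) ltac:(lra)) as [d2 [Hd2 Hv']].
  exists (Rmin d1 d2); split; [now apply Rmin_pos|].
  intros s q HQ Hn.
  pose proof (Rmin_l d1 d2); pose proof (Rmin_r d1 d2).
  specialize (Hu' s q HQ ltac:(lra)); specialize (Hv' s q HQ ltac:(lra)).
  lra.
Qed.

Lemma superdiff_touching (m phi : R -> R -> R) (t r p1 p2 : R) :
  superdiff phi t r p1 p2 ->
  (exists d, 0 < d /\ forall s q, inQ s q -> norm2 (s - t) (q - r) < d ->
     m s q - phi s q <= m t r - phi t r) ->
  superdiff m t r p1 p2.
Proof.
  intros Hphi [d [Hd Hmax]] eps Heps.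
  destruct (Hphi eps Heps) as [d1 [Hd1 Hphi']].
  exists (Rmin d d1); split; [now apply Rmin_pos|].
  intros s q HQ Hn.
  pose proof (Rmin_l d d1); pose proof (Rmin_r d d1).
  specialize (Hmax s q HQ ltac:(lra)); specialize (Hphi' s q HQ ltac:(lra)).
  lra.
Qed.

Lemma derivable_pole (th T t : R) :
  t < T -> derivable_pt_lim (fun s => th / (T - s)) t (th / ((T - t) * (T - t))).
Proof.
  intros Ht; apply is_derive_Reals.
  auto_derive; [lra|]; field; lra.
Qed.

Lemma penalty_horizon (Bmax th t0 T : R) :
  0 < Bmax -> 0 < th -> t0 < T -> exists T1, t0 < T1 < T /\ Bmax < th / (T - T1).
Proof.
  intros HB Hth HT.
  set (q := Rmin ((T - t0) / 2) (th / (2 * Bmax))).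
  assert (Hq : 0 < q /\ q <= (T - t0) / 2 /\ q <= th / (2 * Bmax)).
  { unfold q; split; [apply Rmin_pos; [lra|apply Rdiv_lt_0_compat; lra]|].
    split; [apply Rmin_l|apply Rmin_r]. }
  exists (T - q); split; [lra|].
  replace (T - (T - q)) with q by ring.
  assert (Bmax * q <= th / 2).
  { replace (th / 2) with (Bmax * (th / (2 * Bmax))) by (field; lra).
    apply Rmult_le_compat_l; lra. }
  apply (Rmult_lt_reg_r q); [lra|].
  replace (th / q * q) with th by (field; lra); lra.
Qed.

(* Subtracting the penalty th / (T - t) preserves uniform continuity on a
   rectangle ending before T.  (The [+ 0] is the trivial r-part of the
   separable penalty.) *)
Lemma unif_cont_rect_penalized (f : R -> R -> R) (th T T1 a b : R) :
  T1 < T -> unif_cont_rect f 0 T1 a b ->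
  unif_cont_rect (fun t r => f t r - (th / (T - t) + 0)) 0 T1 a b.
Proof.
  intros HT1 Hf; apply (unif_cont_rect_minus f); [exact Hf|].
  apply (unif_cont_rect_separable (fun t => th / (T - t)) (fun _ => 0)).
  - intros t Ht; apply (derivable_continuous_pt (fun t => th / (T - t)) t).
    exists (th / ((T - t) * (T - t))); apply derivable_pole; lra.
  - intros r _; apply continuity_pt_const; intros ? ?; reflexivity.
Qed.

Lemma Rpower_gt_0 (x y : R) : 0 < Rpower x y.
Proof. unfold Rpower; apply exp_pos. Qed.

Lemma pos_pow_nonneg (p a : R) : 0 <= pos_pow p a.
Proof. unfold pos_pow; destruct Rlt_dec; [left; apply Rpower_gt_0|lra]. Qed.

Lemma pos_pow_pos (p a : R) : 0 < p -> pos_pow p a = Rpower p a.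
Proof. intros; unfold pos_pow; destruct Rlt_dec; lra. Qed.

Section Comparison.

Variables (alpha : R) (m : R -> R -> R).

Hypothesis m_sub : forall t r p1 p2, 0 < t -> 0 < r -> superdiff m t r p1 p2 ->
  p1 + pos_pow p2 alpha * m t r <= 0.

(* At an interior local maximum of m - w - th / (T - t) with m > w, the
   subsolution inequality for m contradicts the strict supersolution
   inequality for w, since the penalization contributes th / (T - t)^2 > 0. *)
Lemma no_penalized_interior_max (w : R -> R -> R) (T th ts rs p1 p2 : R) :
  0 < th -> 0 < ts < T -> 0 < rs ->
  superdiff w ts rs p1 p2 ->
  (forall v, w ts rs < v -> 0 < p1 + pos_pow p2 alpha * v) ->
  w ts rs < m ts rs ->
  (exists d, 0 < d /\ forall s q, inQ s q -> norm2 (s - ts) (q - rs) < d ->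
     m s q - w s q - th / (T - s) <= m ts rs - w ts rs - th / (T - ts)) ->
  False.
Proof.
  intros Hth Hts Hrs Hw Hstrict Hwm [d [Hd Hmax]].
  set (g := th / ((T - ts) * (T - ts))).
  assert (Hg : 0 < g) by (apply Rdiv_lt_0_compat; nra).
  assert (Hphi : superdiff (fun s q => w s q + (th / (T - s) + 0)) ts rs (p1 + g) (p2 + 0)).
  { apply superdiff_plus; [exact Hw|].
    apply (superdiff_separable (fun s => th / (T - s)) (fun _ => 0)).
    - apply derivable_pole; lra.
    - apply derivable_pt_lim_const. }
  assert (Hm : superdiff m ts rs (p1 + g) (p2 + 0)).
  { apply (superdiff_touching m _ ts rs (p1 + g) (p2 + 0) Hphi).
    exists d; split; [exact Hd|]; intros s q HQ Hn; specialize (Hmax s q HQ Hn); lra. }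
  specialize (m_sub ts rs _ _ ltac:(lra) Hrs Hm); rewrite Rplus_0_r in m_sub.
  specialize (Hstrict (m ts rs) Hwm); lra.
Qed.

(* Comparison principle: if m <= w on the parabolic boundary of
   [0, T) x [a, b], then m <= w throughout.  Otherwise the penalized
   difference m - w - th / (T - t) has a positive maximum on [0, T1] x [a, b],
   which the boundary data and the choice of T1 force to be interior. *)
Lemma comparison (w : R -> R -> R) (T a b : R) :
  0 < T -> 0 <= a < b ->
  unif_cont_rect m 0 T a b -> unif_cont_rect w 0 T a b ->
  (forall r, a <= r <= b -> m 0 r <= w 0 r) ->
  (forall t, 0 <= t <= T -> m t a <= w t a /\ m t b <= w t b) ->
  (forall t r, 0 < t < T -> a < r < b -> exists p1 p2, superdiff w t r p1 p2 /\
     forall v, w t r < v -> 0 < p1 + pos_pow p2 alpha * v) ->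
  forall t r, 0 <= t < T -> a <= r <= b -> m t r <= w t r.
Proof.
  intros HT Hab Hm Hw Hinit Hlat Hstrict t0 r0 Ht0 Hr0.
  apply Rnot_lt_le; intros Hlt; set (d := m t0 r0 - w t0 r0).
  destruct (max_on_rect (fun t r => m t r - w t r) 0 T a b ltac:(lra) ltac:(lra)
              (unif_cont_rect_minus m w 0 T a b Hm Hw)) as [tb [rb [Htb [Hrb Hbound]]]].
  set (Bmax := m tb rb - w tb rb).
  assert (HB : d <= Bmax) by (apply (Hbound t0 r0); lra).
  assert (Hd : 0 < d) by (unfold d; lra).
  set (th := d * (T - t0) / 2).
  assert (Hth : 0 < th) by (unfold th; apply Rdiv_lt_0_compat; [apply Rmult_lt_0_compat|]; lra).
  destruct (penalty_horizon Bmax th t0 T ltac:(lra) Hth ltac:(lra)) as [T1 [HT1 Hpen_T1]].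
  set (F := fun t r => (m t r - w t r) - (th / (T - t) + 0)).
  assert (HF : unif_cont_rect F 0 T1 a b).
  { apply unif_cont_rect_penalized; [lra|].
    apply (unif_cont_rect_shrink _ 0 T); [lra|]; now apply unif_cont_rect_minus. }
  destruct (max_on_rect F 0 T1 a b ltac:(lra) ltac:(lra) HF) as [ts [rs [Hts [Hrs Hmax]]]].
  assert (HFs : d / 2 <= F ts rs).
  { replace (d / 2) with (F t0 r0) by (unfold F, th, d; field; lra); apply Hmax; lra. }
  assert (Hneg : forall t r, 0 <= t <= T1 -> m t r <= w t r -> F t r < 0).
  { intros t r Ht Hmw; unfold F.
    assert (0 < th / (T - t)) by (apply Rdiv_lt_0_compat; lra); lra. }
  assert (Hts0 : 0 < ts).
  { destruct (Req_dec ts 0) as [->|]; [|lra].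
    pose proof (Hneg 0 rs ltac:(lra) (Hinit rs Hrs)); lra. }
  assert (HtsT1 : ts < T1).
  { destruct (Req_dec ts T1) as [->|]; [|lra].
    pose proof (Hbound T1 rs ltac:(lra) Hrs) as HB1; cbv beta in HB1; fold Bmax in HB1.
    unfold F in HFs; lra. }
  destruct (Hlat ts ltac:(lra)) as [Hla Hlb].
  assert (Hrsa : a < rs) by (destruct (Req_dec rs a) as [->|]; [pose proof (Hneg ts a ltac:(lra) Hla)|]; lra).
  assert (Hrsb : rs < b) by (destruct (Req_dec rs b) as [->|]; [pose proof (Hneg ts b ltac:(lra) Hlb)|]; lra).
  destruct (Hstrict ts rs ltac:(lra) ltac:(lra)) as [p1 [p2 [Hw_sd Hw_strict]]].
  apply (no_penalized_interior_max w T th ts rs p1 p2); try lra; auto.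
  - assert (0 < th / (T - ts)) by (apply Rdiv_lt_0_compat; lra).
    unfold F in HFs; lra.
  - destruct (rect_max_is_local_max F 0 T1 a b ts rs ltac:(lra) ltac:(lra) Hmax)
      as [rad [Hrad Hloc]].
    exists rad; split; [exact Hrad|]; intros s q _ Hn.
    specialize (Hloc s q Hn); unfold F in Hloc; lra.
Qed.

Lemma comparison_separable (f g f' g' : R -> R) (T a b : R) :
  0 < T -> 0 <= a < b -> unif_cont_rect m 0 T a b ->
  (forall t, 0 <= t <= T -> derivable_pt_lim f t (f' t)) ->
  (forall r, a <= r <= b -> derivable_pt_lim g r (g' r)) ->
  (forall r, a <= r <= b -> m 0 r <= f 0 + g r) ->
  (forall t, 0 <= t <= T -> m t a <= f t + g a /\ m t b <= f t + g b) ->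
  (forall t r v, 0 < t < T -> a < r < b -> f t + g r < v ->
     0 < f' t + pos_pow (g' r) alpha * v) ->
  forall t r, 0 <= t < T -> a <= r <= b -> m t r <= f t + g r.
Proof.
  intros HT Hab Hm Hf Hg Hinit Hlat Hstrict.
  apply (comparison (fun t r => f t + g r) T a b); auto.
  - apply (unif_cont_rect_separable f g); intros y Hy.
    + apply (derivable_continuous_pt f y); exists (f' y); now apply Hf.
    + apply (derivable_continuous_pt g y); exists (g' y); now apply Hg.
  - intros t r Ht Hr; exists (f' t), (g' r); split.
    + apply superdiff_separable; [apply Hf|apply Hg]; lra.
    + intros v Hv; now apply Hstrict.
Qed.

End Comparison.

Lemma derivable_affine (c k t : R) : derivable_pt_lim (fun s => c + k * s) t k.
Proof. apply is_derive_Reals; auto_derive; [exact I|ring]. Qed.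

(* The two barriers, for a fixed time t0 and a point x = c0 - h at which
   m0 has the gap dl = M - m0 x satisfying the key inequality [Hkey]. *)
Section Barriers.

Variables (alpha M B t0 x h dl : R) (m0 : R -> R) (m : R -> R -> R).

Hypothesis Ht0 : 0 < t0.
Hypothesis Hh : 0 < h.
Hypothesis Hhx : h < x.
Hypothesis Hdl : 0 < dl.
Hypothesis Hdl_M : dl < M / 2.
Hypothesis m_bound : forall t r, inQ t r -> Rabs (m t r) <= B.
Hypothesis m_unif : forall T a b, 0 <= a -> unif_cont_rect m 0 T a b.
Hypothesis m_sub : forall t r p1 p2, 0 < t -> 0 < r -> superdiff m t r p1 p2 ->
  p1 + pos_pow p2 alpha * m t r <= 0.
Hypothesis m_init : forall r, 0 <= r -> m 0 r <= m0 r.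
Hypothesis m_left : forall t, 0 <= t -> m t 0 <= 0.
Hypothesis m0_le_M : forall r, 0 <= r -> m0 r <= M.
Hypothesis m0_gap : forall r, 0 <= r <= x -> m0 r <= M - dl.
Hypothesis Hkey : / (M * t0) * dl < Rpower (dl / (4 * h)) alpha.

(* Constants of the barriers: growth rate eps and penalty th of the left
   barrier, which lives on [0, x - eta]; slope L and decay rate lam of the
   linear barrier, which starts at x - kap. *)
Let eps := dl / (12 * t0).
Let kap := h / 4.
Let th := dl * kap / 16.
Let eta := th / (B + dl).
Let L := dl / (4 * h).
Let lam := dl / (2 * t0).

(* The bound B of m is nonnegative, as |m(0, 0)| <= B. *)
Lemma B_nonneg : 0 <= B.
Proof. pose proof (m_bound 0 0 ltac:(split; lra)); pose proof (Rabs_pos (m 0 0)); lra. Qed.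

(* The left barrier reaches the level B + dl before x - h/4. *)
Lemma eta_small : 0 < eta <= h / 64.
Proof.
  pose proof B_nonneg; unfold eta, th, kap; split.
  - apply Rdiv_lt_0_compat; [apply Rdiv_lt_0_compat; [apply Rmult_lt_0_compat|]|]; lra.
  - apply (Rmult_le_reg_r (B + dl)); [lra|].
    replace (dl * (h / 4) / 16 / (B + dl) * (B + dl)) with (dl * (h / 4) / 16) by (field; lra).
    nra.
Qed.

(* Left barrier: above m0 initially, above m(t, 0) <= 0, and above the bound
   B at r = x - eta; strict because it increases in time. *)
Lemma left_barrier (t r : R) : 0 <= t < 2 * t0 -> 0 <= r <= x - eta ->
  m t r <= M - dl + eps * t + th / (x - r).
Proof.
  intros Ht Hr; pose proof B_nonneg; pose proof eta_small.
  assert (Heps : 0 < eps) by (apply Rdiv_lt_0_compat; lra).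
  assert (Hth : 0 < th) by (unfold th, kap; apply Rdiv_lt_0_compat; [apply Rmult_lt_0_compat|]; lra).
  assert (Hpen : forall r, r < x -> 0 < th / (x - r)) by (intros; apply Rdiv_lt_0_compat; lra).
  apply (comparison_separable alpha m m_sub (fun t => (M - dl) + eps * t) (fun r => th / (x - r))
           (fun _ => eps) (fun r => th / ((x - r) * (x - r))) (2 * t0) 0 (x - eta));
    try lra.
  - apply m_unif; lra.
  - intros s _; apply derivable_affine.
  - intros q Hq; apply derivable_pole; lra.
  - intros q Hq; pose proof (m_init q ltac:(lra)); pose proof (m0_gap q ltac:(lra)).
    pose proof (Hpen q ltac:(lra)); lra.
  - intros s Hs; assert (0 <= eps * s) by (apply Rmult_le_pos; lra); split.
    + pose proof (m_left s ltac:(lra)); pose proof (Hpen 0 ltac:(lra)); lra.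
    + replace (th / (x - (x - eta))) with (B + dl) by (unfold eta; field; lra).
      pose proof (m_bound s (x - eta) ltac:(split; lra)); pose proof (Rle_abs (m s (x - eta))).
      lra.
  - intros s q v Hs Hq Hv.
    pose proof (pos_pow_nonneg (th / ((x - q) * (x - q))) alpha).
    assert (0 <= eps * s) by (apply Rmult_le_pos; lra).
    pose proof (Hpen q ltac:(lra)); nra.
Qed.

Lemma left_estimate (t r : R) : 0 <= t <= 3 * t0 / 2 -> 0 <= r <= x - kap ->
  m t r <= M - 13 * dl / 16.
Proof.
  intros Ht Hr; pose proof eta_small.
  assert (Hkap : 0 < kap) by (unfold kap; lra).
  pose proof (left_barrier t r ltac:(lra) ltac:(unfold kap in *; lra)) as Hleft.
  assert (eps * t <= dl / 8).
  { replace (dl / 8) with (eps * (3 * t0 / 2)) by (unfold eps; field; lra).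
    apply Rmult_le_compat_l; [left; apply Rdiv_lt_0_compat|]; lra. }
  assert (th / (x - r) <= dl / 16).
  { replace (dl / 16) with (th / kap) by (unfold th; field; lra).
    unfold Rdiv; apply Rmult_le_compat_l.
    - unfold th; left; apply Rdiv_lt_0_compat; [apply Rmult_lt_0_compat|]; lra.
    - apply Rinv_le_contravar; lra. }
  lra.
Qed.

(* Linear barrier: its left boundary value is controlled by [left_estimate],
   it exceeds B on the right, and it is strict because
   lam < L^alpha * M / 2 by [Hkey]. *)
Lemma linear_barrier (t r : R) : 0 <= t < 3 * t0 / 2 ->
  x - kap <= r <= x + 3 * h / 2 + (B + dl) / L -> m t r <= M + L * (r - x) - lam * t.
Proof.
  intros Ht Hr; pose proof B_nonneg.
  assert (HL : 0 < L) by (unfold L; apply Rdiv_lt_0_compat; lra).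
  assert (HLkap : L * kap = dl / 16) by (unfold L, kap; field; lra).
  assert (Hlam_t : forall s, 0 <= s <= 3 * t0 / 2 -> 0 <= lam * s <= 3 * dl / 4).
  { intros s Hs; replace (3 * dl / 4) with (lam * (3 * t0 / 2)) by (unfold lam; field; lra).
    assert (0 < lam) by (unfold lam; apply Rdiv_lt_0_compat; lra).
    split; [apply Rmult_le_pos|apply Rmult_le_compat_l]; lra. }
  assert (Hb : 0 < (B + dl) / L) by (apply Rdiv_lt_0_compat; lra).
  replace (M + L * (r - x) - lam * t) with ((M + - lam * t) + (- (L * x) + L * r)) by ring.
  apply (comparison_separable alpha m m_sub (fun t => M + - lam * t) (fun r => - (L * x) + L * r)
           (fun _ => - lam) (fun _ => L) (3 * t0 / 2) (x - kap) (x + 3 * h / 2 + (B + dl) / L));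
    try (unfold kap in *; lra).
  - apply m_unif; unfold kap; lra.
  - intros s _; apply derivable_affine.
  - intros q _; apply derivable_affine.
  - intros q Hq; pose proof (m_init q ltac:(unfold kap in *; lra)).
    destruct (Rle_or_lt q x).
    + pose proof (m0_gap q ltac:(unfold kap in *; lra)).
      assert (L * (x - kap) <= L * q) by (apply Rmult_le_compat_l; lra).
      lra.
    + pose proof (m0_le_M q ltac:(lra)).
      assert (L * x <= L * q) by (apply Rmult_le_compat_l; lra).
      lra.
  - intros s Hs; pose proof (Hlam_t s Hs); split.
    + pose proof (left_estimate s (x - kap) Hs ltac:(unfold kap; lra)); lra.
    + set (b := x + 3 * h / 2 + (B + dl) / L).
      replace (- (L * x) + L * b) with (L * (3 * h / 2) + B + dl)
        by (unfold b; field; apply Rgt_not_eq; exact HL).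
      assert (0 < L * (3 * h / 2)) by (apply Rmult_lt_0_compat; lra).
      pose proof (m_bound s b ltac:(split; unfold b; lra)); pose proof (Rle_abs (m s b)).
      lra.
  - intros s q v Hs Hq Hv.
    pose proof (Hlam_t s ltac:(lra)).
    assert (L * (x - kap) <= L * q) by (apply Rmult_le_compat_l; lra).
    assert (Hv2 : M / 2 < v) by lra.
    rewrite pos_pow_pos by exact HL.
    assert (lam < Rpower L alpha * (M / 2)).
    { unfold lam; unfold L in Hkey |- *.
      replace (dl / (2 * t0)) with (/ (M * t0) * dl * (M / 2)) by (field; lra).
      apply Rmult_lt_compat_r; lra. }
    pose proof (Rpower_gt_0 L alpha); nra.
Qed.

Lemma below_M_at_t0 (r : R) : 0 <= r <= x + 3 * h / 2 -> m t0 r < M.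
Proof.
  intros Hr; destruct (Rle_or_lt r (x - kap)) as [Hleft|Hright].
  - pose proof (left_estimate t0 r ltac:(lra) ltac:(lra)); lra.
  - assert (HL : 0 < L) by (unfold L; apply Rdiv_lt_0_compat; lra).
    assert (0 < (B + dl) / L) by (apply Rdiv_lt_0_compat; pose proof B_nonneg; lra).
    pose proof (linear_barrier t0 r ltac:(lra) ltac:(lra)).
    assert (L * (r - x) <= L * (3 * h / 2)) by (apply Rmult_le_compat_l; lra).
    replace (L * (3 * h / 2)) with (3 * dl / 8) in * by (unfold L; field; lra).
    assert (lam * t0 = dl / 2) by (unfold lam; field; lra).
    lra.
Qed.

End Barriers.

Lemma power_threshold (alpha C rho delta : R) :
  1 < alpha -> 0 < C -> 0 < rho -> 0 < delta ->
  Rpower C (/ (alpha - 1)) * Rpower rho (alpha / (alpha - 1)) < delta ->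
  C * delta < Rpower (delta / rho) alpha.
Proof.
  intros Ha HC Hrho Hdelta Hlt.
  assert (Hlhs : 0 < Rpower C (/ (alpha - 1)) * Rpower rho (alpha / (alpha - 1)))
    by (apply Rmult_lt_0_compat; apply Rpower_gt_0).
  pose proof (Rlt_Rpower_l _ _ (alpha - 1) ltac:(lra) (conj Hlhs Hlt)) as Hpow.
  rewrite <- Rpower_mult_distr, !Rpower_mult in Hpow by apply Rpower_gt_0.
  replace (/ (alpha - 1) * (alpha - 1)) with 1 in Hpow by (field; lra).
  replace (alpha / (alpha - 1) * (alpha - 1)) with alpha in Hpow by (field; lra).
  rewrite Rpower_1 in Hpow by exact HC.
  (* [Hpow] reads C * rho^alpha < delta^(alpha - 1); multiply by [delta / rho^alpha] *)
  assert (Hsplit : Rpower (delta / rho) alpha * Rpower rho alpha = delta * Rpower delta (alpha - 1)).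
  { rewrite Rpower_mult_distr by (try apply Rdiv_lt_0_compat; lra).
    replace (delta / rho * rho) with delta by (field; lra).
    rewrite <- (Rpower_1 delta) at 2 by exact Hdelta.
    rewrite <- Rpower_plus; f_equal; ring. }
  pose proof (Rpower_gt_0 rho alpha) as Hrho_a.
  apply (Rmult_lt_reg_r (Rpower rho alpha)); [exact Hrho_a|].
  rewrite Hsplit; nra.
Qed.

Lemma steep_point (alpha M c0 t0 : R) (m0 : R -> R) :
  1 < alpha -> 0 < M -> 0 < c0 -> 0 < t0 ->
  (forall eps, 0 < eps -> exists delta, 0 < delta /\
     forall x y, 0 <= x -> 0 <= y -> Rabs (x - y) < delta -> Rabs (m0 x - m0 y) < eps) ->
  (forall rho, 0 <= rho -> rho < c0 -> m0 rho < M) -> m0 c0 = M ->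
  limsup_left_infty
    (fun rho => (M - m0 rho) / Rpower (c0 - rho) (alpha / (alpha - 1))) c0 ->
  exists x, 0 < c0 - x < x /\ 0 < M - m0 x < M / 2 /\
    / (M * t0) * (M - m0 x) < Rpower ((M - m0 x) / (4 * (c0 - x))) alpha.
Proof.
  intros Ha HM Hc0 Ht0 Hunif Hlt Hc0M Hsteep.
  destruct (Hunif (M / 2) ltac:(lra)) as [du [Hdu Hclose]].
  set (K := Rpower (/ (M * t0)) (/ (alpha - 1)) * Rpower 4 (alpha / (alpha - 1))).
  destruct (Hsteep K (Rmin du (c0 / 2)) ltac:(apply Rmin_pos; lra)) as [x [Hx HK]].
  pose proof (Rmin_l du (c0 / 2)); pose proof (Rmin_r du (c0 / 2)).
  assert (Hgap : M / 2 < m0 x).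
  { specialize (Hclose x c0 ltac:(lra) ltac:(lra) ltac:(split_Rabs; lra)).
    rewrite Hc0M in Hclose; split_Rabs; lra. }
  pose proof (Hlt x ltac:(lra) ltac:(lra)).
  exists x; split; [lra|]; split; [lra|].
  apply power_threshold; try lra.
  - apply Rinv_0_lt_compat, Rmult_lt_0_compat; lra.
  (* the steepness gives K * (c0 - x)^(alpha/(alpha-1)) < M - m0 x *)
  - rewrite <- Rpower_mult_distr, <- Rmult_assoc by lra; fold K.
    pose proof (Rpower_gt_0 (c0 - x) (alpha / (alpha - 1))).
    apply (Rmult_lt_compat_r (Rpower (c0 - x) (alpha / (alpha - 1)))) in HK; [|lra].
    replace ((M - m0 x) / Rpower (c0 - x) (alpha / (alpha - 1)) * Rpower (c0 - x) (alpha / (alpha - 1)))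
      with (M - m0 x) in HK by (field; lra).
    exact HK.
Qed.

Lemma front_gt (m : R -> R -> R) (M t c0 c : R) :
  c0 < c -> (forall r, 0 <= r <= c -> m t r < M) -> Rbar_lt (Finite c0) (front m M t).
Proof.
  intros Hc Hbelow; unfold front.
  destruct (Glb_Rbar_correct (fun rho => 0 <= rho /\ m t rho = M)) as [_ Hglb].
  assert (Hle : Rbar_le (Finite c) (Glb_Rbar (fun rho => 0 <= rho /\ m t rho = M))).
  { apply Hglb; intros y [Hy HyM]; simpl.
    destruct (Rle_or_lt y c) as [Hyc|]; [|lra].
    specialize (Hbelow y (conj Hy Hyc)); lra. }
  destruct (Glb_Rbar (fun rho => 0 <= rho /\ m t rho = M)); simpl in *; auto; lra.
Qed.

Theorem mainTheorem9 (alpha : R) (m0 : R -> R) (M c0 : R) :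
  1 < alpha ->
  BUC1 m0 ->
  (forall x y, 0 <= x -> x <= y -> m0 x <= m0 y) ->
  m0 0 = 0 ->
  is_lub_Rbar (fun y => exists rho, 0 <= rho /\ y = m0 rho) M ->
  0 < M ->
  0 < c0 ->
  (forall rho, 0 <= rho -> rho < c0 -> m0 rho < M) ->
  (forall rho, c0 <= rho -> m0 rho = M) ->
  limsup_left_infty
    (fun rho => (M - m0 rho) / Rpower (c0 - rho) (alpha / (alpha - 1))) c0 ->
  forall m : R -> R -> R,
    BUC2 m -> visc_solution alpha m0 m ->
    forall t, 0 < t -> Rbar_lt (Finite c0) (front m M t).
Proof.
  intros Ha [_ Hunif0] Hmono _ [Hub _] HM Hc0 Hlt Heq Hsteep m [[B Hbound] Hunif]
    [[_ [Hsub [Hinit Hleft]]] _] t Ht.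
  assert (Hm0M : forall r, 0 <= r -> m0 r <= M).
  { intros r Hr; exact (Hub (m0 r) (ex_intro _ r (conj Hr eq_refl))). }
  destruct (steep_point alpha M c0 t m0 Ha HM Hc0 Ht Hunif0 Hlt (Heq c0 (Rle_refl c0)) Hsteep)
    as [x [Hh [Hdl Hkey]]].
  apply (front_gt m M t c0 (x + 3 * (c0 - x) / 2)); [lra|].
  intros r Hr.
  apply (below_M_at_t0 alpha M B t x (c0 - x) (M - m0 x) m0 m); try lra; auto.
  - intros T a b Ha0; apply unif_cont_rect_of_quadrant; auto; lra.
  - intros q Hq; replace (M - (M - m0 x)) with (m0 x) by ring; apply Hmono; lra.
Qed.
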